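(* Let $w(x,y)=x^{a_1}y^{b_1}\cdots x^{a_k}y^{b_k}\in F_2$ with all integers $a_i\neq0$, $b_i\neq 0$, let $B=\sum_{i=1}^k b_i\neq 0$ and $B_i=\sum_{j<i}b_j$. Write $2B_i=k_iB+T_i$ with integers $k_i$ and $0\le T_i<B$. If the word map $w:\mathrm{SL}(2,\mathbb{C})^2\to\mathrm{SL}(2,\mathbb{C})$ is not surjective, then for every integer $0\le T<B$, $$\sum_{i:\,T_i=T} a_i(-1)^{k_i}=0.$$
   Context: The word map sends $(X,Y)$ to $X^{a_1}Y^{b_1}\cdots X^{a_k}Y^{b_k}$. *)

From mathcomp Require Import all_boot all_algebra.
From mathcomp Require Import complex.
From mathcomp Require Import reals Rstruct.
Set Implicit Arguments.
Unset Strict Implicit.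
Unset Printing Implicit Defensive.
Import GRing.Theory Num.Theory.
Local Open Scope ring_scope.

Definition Cplx : numClosedFieldType := complex Rdefinitions.R.

Definition inSL2 (g : 'M[Cplx]_2) : Prop := \det g = 1.

(* The word w(X,Y) = X^{a_1} Y^{b_1} ... X^{a_k} Y^{b_k} (indices shifted to
   0..k-1), with integer exponents (negative powers = matrix inverses). *)
Definition word_map (k : nat) (a b : 'I_k -> int) (X Y : 'M[Cplx]_2) : 'M[Cplx]_2 :=
  \prod_(i < k) (X ^ (a i) * Y ^ (b i)).

Definition word_map_surjective (k : nat) (a b : 'I_k -> int) : Prop :=
  forall g : 'M[Cplx]_2, inSL2 g ->
    exists X Y : 'M[Cplx]_2, [/\ inSL2 X, inSL2 Y & word_map a b X Y = g].

Definition Btot (k : nat) (b : 'I_k -> int) : int := \sum_(i < k) b i.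

Definition Bpre (k : nat) (b : 'I_k -> int) (i : 'I_k) : int :=
  \sum_(j < k | (j < i)%N) b j.

Definition kq (k : nat) (b : 'I_k -> int) (i : 'I_k) : int :=
  ((2 * Bpre b i) %/ Btot b)%Z.
Definition Trem (k : nat) (b : 'I_k -> int) (i : 'I_k) : int :=
  ((2 * Bpre b i) %% Btot b)%Z.

(* If some residue sum c_T = sum_(T_i = T) a_i (-1)^k_i is nonzero, the
   polynomial sum_T c_T X^T has degree < B, so it cannot vanish at all B roots
   of X^B + 1: there is mu with mu^B = -1 and sum_i a_i mu^(2 B_i) <> 0, since
   mu^(2 B_i) = (-1)^k_i mu^T_i.  For X = [[1, s], [0, 1]] and
   Y = diag(mu, mu^-1) the word is upper triangular with diagonal
   (mu^B, mu^-B) = (-1, -1) and upper-right entry -s sum_i a_i mu^(2 B_i), so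
   every [[-1, e], [0, -1]] is a value of w.  Taking X = 1 reaches every
   diagonal element and every unipotent (B <> 0 and C is closed), the rest of
   the upper triangular elements are conjugate to diagonal ones, and every
   element of SL(2, C) is conjugate to an upper triangular one: w would be
   surjective. *)

From mathcomp Require Import all_boot all_algebra all_field.
From mathcomp Require Import ring zify.
Set Implicit Arguments.
Unset Strict Implicit.
Unset Printing Implicit Defensive.
Import GRing.Theory Num.Theory.
Local Open Scope ring_scope.

Lemma exprz_morph (R : unitRingType) (g : int -> R) :
  {morph g : m n / m + n >-> m * n} -> g 0 = 1 -> forall z, g 1 ^ z = g z.
Proof.
move=> gD g0.
have gXn (n : nat) : g 1 ^+ n = g n.
  by elim: n => [|n IHn]; rewrite ?expr0 ?g0 // exprSr IHn -gD -addn1.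
have gK (n : nat) : g (- n%:Z) * g n = 1 by rewrite -gD addNr g0.
have gU (n : nat) : g n \is a GRing.unit.
  by apply/unitrP; exists (g (- n%:Z)); rewrite gK -gD addrN g0.
case=> n; first exact: gXn.
by rewrite NegzE -exprnN gXn -[LHS]mul1r -(gK n.+1) (mulrK (gU n.+1)).
Qed.

Lemma exprz_conj (R : unitRingType) (P X : R) :
  P \is a GRing.unit -> X \is a GRing.unit ->
  forall z, (P * X * P^-1) ^ z = P * X ^ z * P^-1.
Proof.
move=> uP uX; apply: (@exprz_morph _ (fun z => P * X ^ z * P^-1)) => [m n|].
- by rewrite exprzDr // !mulrA mulrVK.
- by rewrite expr0z mulr1 divrr.
Qed.

Section Word.
Variables (R : unitRingType) (k : nat) (a b : 'I_k -> int).

Definition word (X Y : R) : R := \prod_(i < k) (X ^ a i * Y ^ b i).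

Lemma word_conj (P X Y : R) :
  P \is a GRing.unit -> X \is a GRing.unit -> Y \is a GRing.unit ->
  word (P * X * P^-1) (P * Y * P^-1) = P * word X Y * P^-1.
Proof.
move=> uP uX uY.
have conjM : {morph (fun M => P * M * P^-1) : M N / M * N}.
  by move=> M N; rewrite !mulrA mulrVK.
have conj1 : P * 1 * P^-1 = 1 by rewrite mulr1 divrr.
rewrite /word (big_morph _ conjM conj1).
by apply: eq_bigr => i _; rewrite !exprz_conj // conjM.
Qed.

Lemma word1l (Y : R) : Y \is a GRing.unit -> word 1 Y = Y ^ Btot b.
Proof.
move=> uY; rewrite /word /Btot (big_morph _ (exprzDr uY) (expr0z Y)).
by apply: eq_bigr => i _; rewrite exp1rz mul1r.
Qed.

End Word.

Lemma Btot_recr k (b : 'I_k.+1 -> int) :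
  Btot b = Btot (b \o widen_ord (leqnSn k)) + b ord_max.
Proof. exact: big_ord_recr. Qed.

Lemma Bpre_widen k (b : 'I_k.+1 -> int) (i : 'I_k) :
  Bpre b (widen_ord (leqnSn k) i) = Bpre (b \o widen_ord (leqnSn k)) i.
Proof.
by rewrite /Bpre big_mkcond big_ord_recr /= ltnNge ltnW // addr0 -big_mkcond.
Qed.

Lemma Bpre_max k (b : 'I_k.+1 -> int) :
  Bpre b ord_max = Btot (b \o widen_ord (leqnSn k)).
Proof.
rewrite /Bpre big_mkcond big_ord_recr /= ltnn addr0.
by apply: eq_bigr => i _; rewrite /= ltn_ord.
Qed.

Section Matrix22.
Variable R : comNzRingType.

Definition mx22 (p q r s : R) : 'M[R]_2 :=
  \matrix_(i, j) if i == 0 then if j == 0 then p else q else if j == 0 then r else s.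

Lemma mx22E (M : 'M[R]_2) : M = mx22 (M 0 0) (M 0 1) (M 1 0) (M 1 1).
Proof.
apply/matrixP => i j; rewrite !mxE.
by case: i => [[|[|//]]] ?; case: j => [[|[|//]]] ?; congr (M _ _); apply: val_inj.
Qed.

Lemma mulmx22 p q r s p' q' r' s' :
  mx22 p q r s * mx22 p' q' r' s' =
  mx22 (p * p' + q * r') (p * q' + q * s') (r * p' + s * r') (r * q' + s * s').
Proof.
apply/matrixP => i j; rewrite !mxE big_ord_recl big_ord1 !mxE.
by case: i => [[|[|//]]] ?; case: j => [[|[|//]]] ?.
Qed.

Lemma mx22_1 : mx22 1 0 0 1 = 1.
Proof.
apply/matrixP => i j; rewrite !mxE.
by case: i => [[|[|//]]] ?; case: j => [[|[|//]]] ?.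
Qed.

Lemma det_mx22 p q r s : \det (mx22 p q r s) = p * s - q * r.
Proof.
rewrite (expand_det_row _ 0) big_ord_recl big_ord1 /cofactor !det_mx11.
by rewrite !mxE /= /bump /= expr0 expr1; ring.
Qed.

End Matrix22.

Section UpperTriangular.
Variable F : fieldType.

Definition unip_sl2 (e : F) : 'M[F]_2 := mx22 1 e 0 1.
Definition diag_sl2 (mu : F) : 'M[F]_2 := mx22 mu 0 0 mu^-1.

Lemma unitmx_det1 (M : 'M[F]_2) : \det M = 1 -> M \is a GRing.unit.
Proof. by move=> dM; rewrite unitmxE dM unitr1. Qed.

Lemma det_unip_sl2 e : \det (unip_sl2 e) = 1.
Proof. by rewrite det_mx22; ring. Qed.

Lemma det_diag_sl2 mu : mu != 0 -> \det (diag_sl2 mu) = 1.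
Proof. by move=> mu0; rewrite det_mx22 mulr0 subr0 divff. Qed.

Lemma exprz_unip_sl2 e z : unip_sl2 e ^ z = unip_sl2 (z%:~R * e).
Proof.
have {1}-> : e = 1%:~R * e by rewrite mul1r.
apply: (@exprz_morph _ (fun z : int => unip_sl2 (z%:~R * e))) => [m n|].
- by rewrite /unip_sl2 mulmx22 intrD; congr mx22; ring.
- by rewrite mul0r /unip_sl2 mx22_1.
Qed.

Lemma exprz_diag_sl2 mu z : mu != 0 -> diag_sl2 mu ^ z = diag_sl2 (mu ^ z).
Proof.
move=> mu0; apply: (@exprz_morph _ (fun z => diag_sl2 (mu ^ z))) => [m n|].
- rewrite /diag_sl2 mulmx22 expfzDr // invfM; congr mx22; ring.
- by rewrite expr0z /diag_sl2 invr1 mx22_1.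
Qed.

Lemma invr_unip_sl2 e : (unip_sl2 e)^-1 = unip_sl2 (- e).
Proof.
have uK : unip_sl2 (- e) * unip_sl2 e = 1.
  by rewrite mulmx22 -mx22_1; congr mx22; ring.
by rewrite -[LHS]mul1r -uK mulrK // unitmx_det1 // det_unip_sl2.
Qed.

Definition word_coef k (a b : 'I_k -> int) (mu : F) : F :=
  \sum_(i < k) (a i)%:~R * mu ^ (2 * Bpre b i).

Lemma word_unip_diag_sl2 k (a b : 'I_k -> int) s mu : mu != 0 ->
  word a b (unip_sl2 s) (diag_sl2 mu) =
  mx22 (mu ^ Btot b) (s * word_coef a b mu * mu ^ (- Btot b)) 0 (mu ^ (- Btot b)).
Proof.
move=> mu0; elim: k a b => [|k IHk] a b.
  by rewrite /word /word_coef /Btot !big_ord0 oppr0 expr0z mulr0 mul0r mx22_1.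
rewrite /word big_ord_recr -/(word (a \o widen_ord _) (b \o widen_ord _) _ _) IHk.
rewrite [Btot b]Btot_recr /word_coef big_ord_recr /= Bpre_max.
under eq_bigr => i _ do rewrite -Bpre_widen.
rewrite exprz_unip_sl2 exprz_diag_sl2 // /unip_sl2 /diag_sl2 !mulmx22.
set B := Btot _; set S := \sum_(i < k) _.
have muB : mu ^ B != 0 by rewrite expfz_neq0.
have mub : mu ^ b ord_max != 0 by rewrite expfz_neq0.
have -> : 2 * B = B + B by lia.
rewrite opprD !expfzDr // -!invr_expz.
by congr mx22; field; rewrite ?muB ?mub.
Qed.

End UpperTriangular.

Lemma exprz_root (C : numClosedFieldType) (B : int) (d : C) :
  B != 0 -> d != 0 -> exists2 mu : C, mu != 0 & mu ^ B = d.
Proof.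
case: B => n B0 d0.
  have n0 : (0 < n)%N by rewrite lt0n.
  by exists (n.-root d); [rewrite rootC_eq0 | exact: rootCK].
exists (n.+1.-root d)^-1; first by rewrite invr_eq0 rootC_eq0.
by rewrite NegzE -exprnN -exprVn invrK rootCK.
Qed.

Lemma mx22_triangularize (C : numClosedFieldType) (g : 'M[C]_2) :
  exists (P : 'M[C]_2) (d e f : C),
    P \is a GRing.unit /\ g = P * mx22 d e 0 f * P^-1.
Proof.
rewrite [g]mx22E; move: (g 0 0) (g 0 1) (g 1 0) (g 1 1) => p q r s.
have [-> | q0] := eqVneq q 0.
  pose P := mx22 (0 : C) 1 1 0.
  have PP : P * P = 1 by rewrite mulmx22 -mx22_1; congr mx22; ring.
  have uP : P \is a GRing.unit by apply/unitrP; exists P.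
  have PV : P^-1 = P by rewrite -[LHS]mul1r -PP mulrK.
  by exists P, s, r, p; split; rewrite // PV !mulmx22; congr mx22; ring.
pose t := p + s; pose delta := p * s - q * r.
pose d := (t + sqrtC (t ^+ 2 - 4 * delta)) / 2.
have eigen_d : d * d - t * d + delta = 0.
  set disc := t ^+ 2 - 4 * delta.
  have -> : d * d - t * d + delta = (sqrtC disc ^+ 2 - disc) / 4.
    by rewrite /d /disc; field.
  by rewrite sqrtCK subrr mul0r.
pose P := mx22 q 0 (d - p) 1.
have uP : P \is a GRing.unit.
  by rewrite unitmxE det_mx22 mulr1 mul0r subr0 unitfE.
exists P, d, 1, (t - d); split => //.
apply: (canRL (mulrK uP)); rewrite !mulmx22; congr mx22; rewrite /t; try ring.
transitivity ((d - p) * d + 1 * 0 - (d * d - t * d + delta)).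
  by rewrite /t /delta; ring.
by rewrite eigen_d subr0.
Qed.

Section WordImage.
Variables (C : numClosedFieldType) (k : nat) (a b : 'I_k -> int).

Definition in_word_image (g : 'M[C]_2) : Prop :=
  exists X Y : 'M[C]_2, [/\ \det X = 1, \det Y = 1 & word a b X Y = g].

Lemma word_image_conj g P :
  P \is a GRing.unit -> in_word_image g -> in_word_image (P * g * P^-1).
Proof.
move=> uP [X [Y [dX dY <-]]].
have dP : \det P != 0 by rewrite -unitfE -unitmxE.
have det_conj M : \det M = 1 -> \det (P * M * P^-1) = 1.
  by move=> dM; rewrite !detM detV dM mulr1 divff.
exists (P * X * P^-1), (P * Y * P^-1); split; rewrite ?det_conj //.
by rewrite word_conj // unitmx_det1.
Qed.

Lemma word_image_neg_unip (mu e : C) :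
  mu != 0 -> mu ^ Btot b = -1 -> word_coef a b mu != 0 ->
  in_word_image (mx22 (-1) e 0 (-1)).
Proof.
move=> mu0 muB S0.
exists (unip_sl2 (- e / word_coef a b mu)), (diag_sl2 mu).
split; rewrite ?det_unip_sl2 ?det_diag_sl2 //.
by rewrite word_unip_diag_sl2 // -invr_expz muB invrN1; congr mx22; field.
Qed.

Hypothesis Bnz : Btot b != 0.

Lemma word_image_diag (d : C) : d != 0 -> in_word_image (diag_sl2 d).
Proof.
move=> d0; have [mu mu0 muB] := exprz_root Bnz d0.
exists 1, (diag_sl2 mu); split; rewrite ?det1 ?det_diag_sl2 //.
by rewrite word1l ?exprz_diag_sl2 ?muB // unitmx_det1 ?det_diag_sl2.
Qed.

Lemma word_image_unip (e : C) : in_word_image (unip_sl2 e).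
Proof.
have B0 : (Btot b)%:~R != 0 :> C by rewrite intr_eq0.
exists 1, (unip_sl2 (e / (Btot b)%:~R)); split; rewrite ?det1 ?det_unip_sl2 //.
rewrite word1l ?unitmx_det1 ?det_unip_sl2 // exprz_unip_sl2.
by congr unip_sl2; field.
Qed.

Lemma word_image_upper_sl2 (d e : C) : d != 0 -> d != 1 -> d != -1 ->
  in_word_image (mx22 d e 0 d^-1).
Proof.
move=> d0 d1 dN1.
have dd : 1 - d * d != 0.
  by rewrite -expr2 subr_eq0 eq_sym sqrf_eq1 negb_or d1 dN1.
pose Q := unip_sl2 (e / (d^-1 - d)).
have -> : mx22 d e 0 d^-1 = Q * diag_sl2 d * Q^-1.
  rewrite invr_unip_sl2 /unip_sl2 /diag_sl2 !mulmx22.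
  by congr mx22; field; rewrite d0 ?mulNr ?dd.
by apply: word_image_conj; [exact/unitmx_det1/det_unip_sl2 | exact: word_image_diag].
Qed.

Lemma word_image_sl2 (mu : C) :
  mu != 0 -> mu ^ Btot b = -1 -> word_coef a b mu != 0 ->
  forall g : 'M[C]_2, \det g = 1 -> in_word_image g.
Proof.
move=> mu0 muB S0 g detg.
have [P [d [e [f [uP defg]]]]] := mx22_triangularize g.
have df : d * f = 1.
  have dP : \det P != 0 by rewrite -unitfE -unitmxE.
  move: detg; rewrite defg !detM detV mulrAC divff // mul1r.
  by rewrite det_mx22 mulr0 subr0.
rewrite defg; apply: word_image_conj uP _.
rewrite -(mulr1_eq df).
have [-> | d1] := eqVneq d 1; first by rewrite invr1; exact: word_image_unip.
have [-> | dN1] := eqVneq d (-1).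
  by rewrite invrN1; exact: word_image_neg_unip S0.
apply: word_image_upper_sl2 => //.
by apply: contra_eq_neq df => ->; rewrite mul0r eq_sym oner_neq0.
Qed.

End WordImage.

Lemma separable_Xn_add1 (R : idomainType) n :
  (n.*2)%:R != 0 :> R -> separable_poly ('X^n + 1 : {poly R}).
Proof.
move=> n2; apply: (@dvdp_separable _ ('X^(n.*2) - 1)).
  2: exact: separable_Xn_sub_1.
have -> : 'X^(n.*2) - 1 = ('X^n - 1) * ('X^n + 1) :> {poly R}.
  by rewrite -addnn exprD; ring.
exact: dvdp_mull.
Qed.

Section ResiduePolynomial.
Variables (C : numClosedFieldType) (k : nat) (a b : 'I_k -> int).

Definition residue_sum (T : int) : int :=
  \sum_(i < k | Trem b i == T) a i * (-1) ^ kq b i.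

Definition residue_poly (n : nat) : {poly C} := \poly_(j < n) (residue_sum j)%:~R.

Lemma word_coef_residue_poly n (mu : C) : (0 < n)%N -> Btot b = n%:Z ->
  mu != 0 -> mu ^ Btot b = -1 -> word_coef a b mu = (residue_poly n).[mu].
Proof.
move=> n0 Bn mu0 muB.
have B0 : Btot b != 0 by rewrite Bn eqz_nat -lt0n.
have T0 i : 0 <= Trem b i by exact: modz_ge0.
have Tn i : (`|Trem b i| < n)%N.
  have := ltz_mod (2 * Bpre b i) B0; rewrite -/(Trem b i) Bn ger0_norm //.
  by move: (T0 i); lia.
pose f i := ((a i * (-1) ^ kq b i)%:~R : C).
have term i : (a i)%:~R * mu ^ (2 * Bpre b i) = f i * mu ^+ `|Trem b i|.
  rewrite /f intrM rmorphXz ?unitrN1 // rmorphN1.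
  rewrite (divz_eq (2 * Bpre b i) (Btot b)) expfzDr // -/(kq b i) -/(Trem b i).
  rewrite [kq b i * _]mulrC -exprz_exp muB.
  by rewrite -{1}(gez0_abs (T0 i)) mulrA.
rewrite /word_coef; under eq_bigr => i _ do rewrite term.
rewrite horner_poly (partition_big (fun i => Ordinal (Tn i)) xpredT) //=.
apply: eq_bigr => j _; rewrite rmorph_sum mulr_suml /=.
apply: eq_big => [i | i /eqP <-] //.
by rewrite -(inj_eq val_inj) /= -eqz_nat gez0_abs.
Qed.

Lemma exists_root_word_coef_neq0 (T : int) :
  0 <= T < Btot b -> residue_sum T != 0 ->
  exists mu : C, [/\ mu != 0, mu ^ Btot b = -1 & word_coef a b mu != 0].
Proof.
move=> /andP[T0 TB] rT.
have [n Bn] : exists n, Btot b = n%:Z.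
  by exists `|Btot b|%N; rewrite gez0_abs //; lia.
have n0 : (0 < n)%N by lia.
have p0 : residue_poly n != 0.
  apply: contraNneq rT => p0.
  have : (residue_poly n)`_`|T| = 0 by rewrite p0 coef0.
  have Tn : (`|T| < n)%N by lia.
  by rewrite coef_poly Tn gez0_abs // => /eqP; rewrite intr_eq0.
have [rs def_q] := closed_field_poly_normal ('X^n + 1 : {poly C}).
rewrite -polyC1 lead_coefXnaddC // scale1r polyC1 in def_q.
have rs_uniq : uniq rs.
  rewrite -separable_prod_XsubC -def_q separable_Xn_add1 //.
  by rewrite pnatr_eq0 double_eq0 -lt0n.
have size_rs : size rs = n.
  by apply: succn_inj; rewrite -(size_prod_XsubC _ id) -def_q -polyC1 size_XnaddC.
have : ~~ all (root (residue_poly n)) rs.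
  apply/negP => /(max_poly_roots p0)/(_ rs_uniq).
  by rewrite size_rs ltnNge size_poly.
rewrite -has_predC => /hasP[z z_rs /= pz].
have : root ('X^n + 1) z by rewrite def_q root_prod_XsubC.
rewrite rootE !hornerE addr_eq0 => /eqP zn.
have z0 : z != 0.
  by apply: contra_eq_neq zn => ->; rewrite expr0n gtn_eqF // eq_sym oppr_eq0 oner_eq0.
have zB : z ^ Btot b = -1 by rewrite Bn.
by exists z; rewrite (word_coef_residue_poly n0 Bn z0 zB).
Qed.

End ResiduePolynomial.

Theorem corollary7p3 (k : nat) (a b : 'I_k -> int) :
  (forall i, a i != 0) ->
  (forall i, b i != 0) ->
  Btot b != 0 ->
  ~ word_map_surjective a b ->
  forall T : int, 0 <= T < Btot b ->
    \sum_(i < k | Trem b i == T) a i * (-1) ^ (kq b i) = 0.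
Proof.
(* The exponents need not be nonzero for this implication. *)
move=> _ _ Bnz not_surj T T_range; apply/eqP/contraT => rT_neq0.
have [mu [mu0 muB coef_neq0]] :=
  exists_root_word_coef_neq0 Cplx T_range rT_neq0.
case: not_surj => g /(word_image_sl2 Bnz mu0 muB coef_neq0)[X [Y [dX dY wXY]]].
by exists X, Y.
Qed.
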